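(* Let $G$ be an abelian group (written multiplicatively) and let $C$ be a finite Sidon subset of $G$. If $A,B$ are (nonempty) subsets of $G$ with $AB\subset C$, then $|AB|\geq |A|+|B|-1$.
   Context: $AB=\{ab: a\in A, b\in B\}$. A subset $C\subset G$ is a Sidon subset if the equation $ab=cd$ with $a,b,c,d\in C$ has only the trivial solutions $\{a,b\}=\{c,d\}$. *)

(* an abelian group is a zmodType (written additively). *)
From HB Require Import structures.
From mathcomp Require Import all_boot all_order all_algebra.
From mathcomp Require Import finmap.
Set Implicit Arguments. Unset Strict Implicit. Unset Printing Implicit Defensive.
Import GRing.Theory.
Local Open Scope ring_scope.
Local Open Scope fset_scope.

Definition sumset (G : zmodType) (A B : {fset G}) : {fset G} :=
  [fset (a + b)%R | a in A, b in B].

Definition sidon (G : zmodType) (C : {fset G}) : Prop :=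
  forall a b c d, a \in C -> b \in C -> c \in C -> d \in C ->
    (a + b = c + d)%R -> ((a = c /\ b = d) \/ (a = d /\ b = c)).

From HB Require Import structures.
From mathcomp Require Import all_boot all_order all_algebra.
From mathcomp Require Import finmap.
Local Open Scope fset_scope.

Import GRing.Theory.

(* If a <> a' in A and b <> b' in B, then (a + b) + (a' + b') = (a + b') + (a' + b)
   is a nontrivial coincidence among four elements of C, so a Sidon set only
   contains sumsets A + B in which A or B is a singleton.  In that case A + B
   is a translate of the other summand, which gives the bound. *)

Lemma cardfs_le1 (K : choiceType) (A : {fset K}) :
  {in A &, forall x y, x = y} -> (#|` A| <= 1)%N.
Proof.
move=> A_const; have [->|[x xA]] := fset_0Vmem A; first by rewrite cardfs0.
rewrite -(cardfs1 x); apply: fsubset_leq_card; apply/fsubsetP => y yA.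
by rewrite in_fset1 (A_const y x).
Qed.

Section Sumset.

Context {G : zmodType}.
Implicit Types (A B C : {fset G}) (a b : G).

Lemma mem_sumset {A B a b} : a \in A -> b \in B -> (a + b)%R \in sumset A B.
Proof. by move=> aA bB; apply/imfset2P; exists a => //; exists b. Qed.

Lemma card_sumset_ge_r {A} B {a} : a \in A -> (#|` B| <= #|` sumset A B|)%N.
Proof.
move=> aA; have <- : #|` [fset (a + b)%R | b in B]| = #|` B|.
  by rewrite card_imfset //; apply: addrI.
apply/fsubset_leq_card/fsubsetP => _ /imfsetP [b bB ->].
exact: mem_sumset.
Qed.

Lemma card_sumset_ge_l A {B b} : b \in B -> (#|` A| <= #|` sumset A B|)%N.
Proof.
move=> bB; have <- : #|` [fset (a + b)%R | a in A]| = #|` A|.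
  by rewrite card_imfset //; apply: addIr.
apply/fsubset_leq_card/fsubsetP => _ /imfsetP [a aA ->].
exact: mem_sumset.
Qed.

Lemma sidon_sumset_rect {C A B} : sidon C -> sumset A B `<=` C ->
  {in A &, forall a a', {in B &, forall b b', a = a' \/ b = b'}}.
Proof.
move=> sC /fsubsetP sABC a a' aA a'A b b' bB b'B.
have sums_eq : ((a + b) + (a' + b') = (a + b') + (a' + b))%R.
  by rewrite addrACA [RHS]addrACA (addrC b).
have [[/addrI -> _]|[/addIr -> _]] := sC _ _ _ _
  (sABC _ (mem_sumset aA bB)) (sABC _ (mem_sumset a'A b'B))
  (sABC _ (mem_sumset aA b'B)) (sABC _ (mem_sumset a'A bB)) sums_eq.
- by right.
- by left.
Qed.

Lemma sidon_sumset_card_le1 {C A B} : sidon C -> sumset A B `<=` C ->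
  (#|` A| <= 1)%N || (#|` B| <= 1)%N.
Proof.
move=> sC sABC; have rect := sidon_sumset_rect sC sABC.
apply/orP; case: (boolP (#|` A| <= 1)%N) => [|A_gt1]; [by left | right].
apply: cardfs_le1 => b b' bB b'B; case: (eqVneq b b') => // /negbTE b_neq.
move/negP: A_gt1; case; apply: cardfs_le1 => a a' aA a'A.
by case: (rect a a' aA a'A b b' bB b'B) => // /eqP; rewrite b_neq.
Qed.

End Sumset.

Theorem corollary2p8 (G : zmodType) (C A B : {fset G}) :
  sidon C -> A != fset0 -> B != fset0 -> sumset A B `<=` C ->
  (#|` A| + #|` B| - 1 <= #|` sumset A B|)%N.
Proof.
move=> sC /fset0Pn [a aA] /fset0Pn [b bB] sABC.
rewrite leq_subLR.
have [A_le1|B_le1] := orP (sidon_sumset_card_le1 sC sABC).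
- exact: leq_add A_le1 (card_sumset_ge_r B aA).
- by rewrite addnC; apply: leq_add B_le1 (card_sumset_ge_l A bB).
Qed.
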